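(* Let $\Bbbk$ be a field of characteristic zero and $n \ge 1$. Let $\mathrm{Se}_n$ be the Sergeev algebra and $e_{(n)}, e_{(1^n)} \in \mathrm{Se}_n$ as in the context. Then there is an isomorphism of $\mathbb{Z}/2\mathbb{Z}$-graded left $\mathrm{Se}_n$-modules $\mathrm{Se}_n e_{(n)} \cong \mathrm{Se}_n e_{(1^n)}\{n\}$.
   Context: $\mathrm{Cliff}_n$ is the $\Bbbk$-algebra with generators $c_1,\dots,c_n$ and relations $c_i^2=-1$ and $c_ic_j=-c_jc_i$ for $i\neq j$. The Sergeev algebra is $\mathrm{Se}_n = \mathrm{Cliff}_n \rtimes \Bbbk[S_n]$, where $S_n$ acts on $\mathrm{Cliff}_n$ by permuting the generators ($w c_i w^{-1} = c_{w(i)}$). It is $\mathbb{Z}/2\mathbb{Z}$-graded with $c_i$ odd and the simple transpositions $s_1,\dots,s_{n-1}$ even. $e_{(n)} = \frac{1}{n!}\sum_{w \in S_n} w$ and $e_{(1^n)} = \frac{1}{n!}\sum_{w\in S_n} (-1)^{\ell(w)} w$, where $\ell$ is the length function. For a graded module $M$, $M\{k\}$ denotes $M$ with its $\mathbb{Z}/2\mathbb{Z}$-grading shifted by $k \bmod 2$. *)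

(* Concrete model of the Sergeev algebra Se_n = Cliff_n x| k[S_n]. *)
From HB Require Import structures.
From mathcomp Require Import all_boot all_order all_fingroup all_algebra.
Set Implicit Arguments. Unset Strict Implicit. Unset Printing Implicit Defensive.
Import GRing.Theory.
Local Open Scope ring_scope.

Section Sergeev.
Variables (k : fieldType) (n : nat).

(* Cliff_n in its monomial basis: c_A := c_{a_1} c_{a_2} ... c_{a_m} for
   A = {a_1 < ... < a_m}; an element is its coefficient function. *)
Definition Cl := {ffun {set 'I_n} -> k^o}.

Definition clmono (A : {set 'I_n}) : Cl := [ffun B => (B == A)%:R].

(* c_A * c_j, using c_i c_j = - c_j c_i (i <> j) and c_j^2 = -1 *)
Definition clmono_gen (A : {set 'I_n}) (j : 'I_n) : Cl :=
  (-1) ^+ #|[set a in A | (j < a)%N]| *: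
    (if j \in A then - clmono (A :\ j) else clmono (j |: A)).

Definition clmulgen (x : Cl) (j : 'I_n) : Cl :=
  \sum_(A : {set 'I_n}) x A *: clmono_gen A j.

Definition clword (x : Cl) (s : seq 'I_n) : Cl := foldl clmulgen x s.

(* product in Cliff_n (enum B lists B in increasing order) *)
Definition clmul (x y : Cl) : Cl :=
  \sum_(B : {set 'I_n}) y B *: clword x (enum B).

(* w y w^{-1}: the S_n-action c_i |-> c_{w(i)} *)
Definition clconj (w : 'S_n) (y : Cl) : Cl :=
  \sum_(B : {set 'I_n}) y B *: clword (clmono set0) [seq w b | b <- enum B].

(* Se_n with basis c_A w, (A, w) in {set 'I_n} * 'S_n *)
Definition Se := {ffun {set 'I_n} * 'S_n -> k^o}.

(* the element z * u, z in Cliff_n, u in S_n *)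
Definition sebasis (z : Cl) (u : 'S_n) : Se :=
  [ffun r => if r.2 == u then z r.1 else 0].

(* group product in S_n as composition of functions: (w o v)(i) = w (v i);
   in mathcomp, (v * w)%g i = w (v i). *)
Definition scomp (w v : 'S_n) : 'S_n := (v * w)%g.

(* (c_A w)(c_B v) = c_A (w c_B w^{-1}) (w o v), extended bilinearly *)
Definition semul (x y : Se) : Se :=
  \sum_(p : {set 'I_n} * 'S_n) \sum_(q : {set 'I_n} * 'S_n)
     (x p * y q) *: sebasis (clmul (clmono p.1) (clconj p.2 (clmono q.1)))
                            (scomp p.2 q.2).

(* e_(n) and e_(1^n); (-1)^{l(w)} = (-1)^{odd_perm w} *)
Definition e_triv : Se :=
  (n`!%:R)^-1 *: \sum_(w : 'S_n) sebasis (clmono set0) w.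
Definition e_sgn : Se :=
  (n`!%:R)^-1 *: \sum_(w : 'S_n) ((-1) ^+ odd_perm w) *: sebasis (clmono set0) w.

Definition left_ideal (e : Se) (x : Se) : Prop := exists y, x = semul y e.

Definition homog (p : bool) (x : Se) : Prop :=
  forall r : {set 'I_n} * 'S_n, x r != 0 -> odd #|r.1| = p.

End Sergeev.

From mathcomp Require Import all_boot all_order all_fingroup all_algebra zify.
Set Implicit Arguments. Unset Strict Implicit. Unset Printing Implicit Defensive.
Import GRing.Theory.
Local Open Scope ring_scope.

(* Let T = {1, ..., n} and c_T = c_1 c_2 ... c_n.  Since the generators
   anticommute, w c_T w^-1 = c_{w 1} ... c_{w n} = (-1)^l(w) c_T, hence
   e_(n) c_T = c_T e_(1^n) and e_(1^n) c_T = c_T e_(n); moreover c_T^2 = +-1.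
   So right multiplication by c_T maps Se_n e_(n) onto Se_n e_(1^n), with
   inverse +- right multiplication by c_T.  It commutes with the left action,
   and shifts the degree by n because c_A c_T = +- c_{T \ A}. *)

Section SignCombinatorics.
Variable n : nat.
Implicit Types (A B C D S X : {set 'I_n}) (u v w : 'S_n) (a b j m : 'I_n).

Local Notation xorsum F := (\big[addb/false]_(i : 'I_n) F i).

Definition card_gt C j := #|[set a in C | (j < a)%N]|.
Definition toggle C j := if j \in C then C :\ j else j |: C.
Definition symd A B := (A :\: B) :|: (B :\: A).

(* c_A c_B = (-1)^(clsign A B) c_(symd A B) *)
Definition clsign A B := (\sum_(b in B) (card_gt A b + (b \in A)))%N.

Definition inv_in w B :=
  (\sum_(a in B) \sum_(b in B) ((a < b)%N && (w b < w a)%N))%N.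

Definition swapped u a b := (a < b)%N (+) (u a < u b)%N.
Definition ninv u := (\sum_(a : 'I_n) \sum_(b : 'I_n) ((a < b)%N && swapped u a b))%N.

(* The sign and monomial obtained by multiplying (-1)^e c_C on the right by c_j. *)
Definition clmul_step (p : nat * {set 'I_n}) j :=
  ((p.1 + card_gt p.2 j + (j \in p.2))%N, toggle p.2 j).

Lemma ltn_perm_swap w a b : a != b -> (w b < w a)%N = ~~ (w a < w b)%N.
Proof.
move=> ab; have : w a != w b by rewrite (inj_eq perm_inj).
by rewrite neq_ltn; case: ltngtP.
Qed.

Lemma mem_imset_perm w S a : (a \in w @: S) = ((w^-1)%g a \in S).
Proof.
apply/imsetP/idP => [[b bS ->]|aS]; first by rewrite permK.
by exists ((w^-1)%g a); rewrite ?permKV.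
Qed.

Lemma imsetT_perm w : w @: setT = setT.
Proof. by apply/setP => a; rewrite mem_imset_perm !inE. Qed.

Lemma imsetC_perm w B : w @: (~: B) = ~: (w @: B).
Proof. by apply/setP => a; rewrite mem_imset_perm !inE mem_imset_perm. Qed.

Lemma symd0 A : symd A set0 = A.
Proof. by apply/setP => a; rewrite !inE; case: (a \in A). Qed.

Lemma symdT A : symd A setT = ~: A.
Proof. by apply/setP => a; rewrite !inE; case: (a \in A). Qed.

Lemma symdC A X : symd A (~: X) = ~: symd A X.
Proof. by apply/setP => a; rewrite !inE; case: (a \in A); case: (a \in X). Qed.

Lemma card_set_sum (P : pred 'I_n) : #|[set a | P a]| = (\sum_a P a)%N.
Proof.
rewrite -sum1_card big_mkcond /=; apply: eq_bigr => a _; rewrite inE.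
by case: (P a).
Qed.

Lemma clsign0l C : clsign set0 C = 0%N.
Proof.
rewrite /clsign big1 // => b _; rewrite inE addn0 /card_gt.
by apply/eqP; rewrite cards_eq0; apply/eqP/setP => a; rewrite !inE.
Qed.

Lemma clsign0r A : clsign A set0 = 0%N.
Proof. by rewrite /clsign big_set0. Qed.

Lemma clsign_setC A X : (clsign A X + clsign A (~: X) = clsign A setT)%N.
Proof. by rewrite /clsign [in RHS](big_setID X) /= setTI setTD. Qed.

Lemma inv_in0 w : inv_in w set0 = 0%N.
Proof. by rewrite /inv_in big_set0. Qed.

Lemma inv_inT w : inv_in w setT = ninv w.
Proof.
rewrite /inv_in /ninv; apply: eq_big => [a|a _]; first by rewrite inE.
apply: eq_big => [b|b _]; first by rewrite inE.
rewrite /swapped; case: ltngtP => //= ab.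
by rewrite ltn_perm_swap // neq_ltn ab.
Qed.

Lemma inv_in_setU1 w S m : (forall a, a \in S -> a < m)%N ->
  inv_in w (m |: S) = (inv_in w S + \sum_(a in S) (w m < w a))%N.
Proof.
move=> ltm; have mS : m \notin S by apply/negP => /ltm; rewrite ltnn.
rewrite /inv_in big_setU1 //= big1 ?add0n; last first.
  move=> b; rewrite !inE => /orP [/eqP ->|/ltm lt_bm]; first by rewrite ltnn.
  by rewrite ltnNge ltnW.
rewrite addnC -big_split /=; apply: eq_bigr => a aS.
by rewrite big_setU1 //= ltm // addnC.
Qed.

Section SortedWords.

Let ltI a b := (a < b)%N.

Lemma sorted_enum_set S : sorted ltI (enum S).
Proof.
have : sorted ltI (enum 'I_n).
  by have := iota_ltn_sorted 0 n; rewrite -val_enum_ord sorted_map.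
rewrite enumT /enum_mem => srt; apply: sorted_filter srt.
by move=> a b c; apply: ltn_trans.
Qed.

Lemma sorted_rconsP (s : seq 'I_n) m :
  sorted ltI (rcons s m) -> sorted ltI s /\ all (ltI^~ m) s.
Proof.
move=> srt; split; first by move: srt; rewrite -cats1 => /cat_sorted2 [].
have tr : transitive (fun a b => ltI b a).
  by move=> a b c ba cb; apply: ltn_trans cb ba.
by move: srt; rewrite -rev_sorted rev_rcons /= => /(order_path_min tr); rewrite all_rev.
Qed.

Lemma set_rcons (s : seq 'I_n) m : [set a in rcons s m] = m |: [set a in s].
Proof. by apply/setP => a; rewrite !inE mem_rcons in_cons. Qed.

(* Multiplying c_A by an increasing word c_B: each later letter is larger than
   the earlier ones, so its reordering sign only depends on A. *)
Lemma foldl_clmul_step e A (s : seq 'I_n) : sorted ltI s ->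
  foldl clmul_step (e, A) s = ((e + clsign A [set a in s])%N, symd A [set a in s]).
Proof.
elim/last_ind: s => [|s m IH].
  move=> _ /=; rewrite /clsign big_pred0 ?addn0; last by move=> a; rewrite inE.
  by congr (_, _); apply/setP => a; rewrite !inE /= in_nil andbF orbF.
move=> /sorted_rconsP [/IH {}IH /allP lt_m].
rewrite foldl_rcons IH set_rcons /clmul_step /=.
have mS : m \notin s by apply/negP => /lt_m; rewrite /ltI ltnn.
have m_symd : (m \in symd A [set a in s]) = (m \in A).
  by rewrite !inE (negbTE mS) /= ?andbT ?orbF; case: (m \in A).
congr (_, _).
  have card_gt_symd : card_gt (symd A [set a in s]) m = card_gt A m.
    rewrite /card_gt; apply: eq_card => a; rewrite !inE.
    case: ltnP => ma; rewrite ?andbF //=.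
    have -> : (a \in s) = false.
      by apply/negP => /lt_m; rewrite /ltI ltnNge ltnW.
    by case: (a \in A).
  rewrite /clsign big_setU1 /=; last by rewrite inE.
  rewrite m_symd card_gt_symd; lia.
rewrite /toggle m_symd; apply/setP => a.
case: (boolP (m \in A)) => mA; rewrite !inE;
  case: (boolP (a == m)) => [/eqP ->|am]; rewrite ?mA ?(negbTE mS) ?am //=.
Qed.

(* Conjugating c_S by w: the word c_{w s_1} ... c_{w s_m} for S = {s_1 < ... < s_m}. *)
Lemma foldl_clmul_step_perm e w (s : seq 'I_n) : sorted ltI s ->
  foldl clmul_step (e, set0) (map w s) =
    ((e + inv_in w [set a in s])%N, w @: [set a in s]).
Proof.
elim/last_ind: s => [|s m IH].
  move=> _ /=; rewrite /inv_in big_pred0 ?addn0; last by move=> a; rewrite inE.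
  by congr (_, _); apply/setP => a; rewrite mem_imset_perm !inE in_nil.
move=> /sorted_rconsP [/IH {}IH /allP lt_m].
rewrite map_rcons foldl_rcons IH set_rcons /clmul_step /=.
have ltm a : a \in [set b in s] -> (a < m)%N by rewrite inE => /lt_m.
have wm_new : (w m \in w @: [set a in s]) = false.
  by rewrite mem_imset_perm permK inE; apply/negP => /lt_m; rewrite /ltI ltnn.
rewrite wm_new /toggle wm_new imsetU1 inv_in_setU1 // addn0 addnA.
congr ((_ + _ + _)%N, _).
rewrite /card_gt card_set_sum (reindex_inj (@perm_inj _ w)) [RHS]big_mkcond /=.
by apply: eq_bigr => a _; rewrite mem_imset_perm permK !inE; case: (a \in s).
Qed.

End SortedWords.

Lemma swapped_diag u a : swapped u a a = false.
Proof. by rewrite /swapped !ltnn. Qed.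

Lemma swappedC u a b : swapped u a b = swapped u b a.
Proof.
rewrite /swapped; case: (ltngtP a b) => [ab|ba|/val_inj ->] //=.
  by rewrite [(u b < u a)%N]ltn_perm_swap // neq_ltn ab.
by rewrite [(u b < u a)%N]ltn_perm_swap ?negbK // neq_ltn ba orbT.
Qed.

Lemma odd_sum (F : 'I_n -> nat) : odd (\sum_i F i) = xorsum (fun i => odd (F i)).
Proof. exact: (big_morph odd oddD). Qed.

Lemma odd_ninvE u :
  odd (ninv u) =
    xorsum (fun a : 'I_n => xorsum (fun b : 'I_n => (a < b)%N && swapped u a b)).
Proof.
rewrite /ninv odd_sum; apply: eq_bigr => a _; rewrite odd_sum.
by apply: eq_bigr => b _; rewrite oddb.
Qed.

Lemma sum_pairs_sym (F : 'I_n -> 'I_n -> bool) :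
  (forall a b, F a b = F b a) -> (forall a, F a a = false) ->
  ((\sum_(a : 'I_n) \sum_(b : 'I_n) ((a < b)%N && F a b)).*2 =
     \sum_(a : 'I_n) \sum_(b : 'I_n) F a b)%N.
Proof.
move=> FC Fdiag.
have -> : (\sum_(a : 'I_n) \sum_(b : 'I_n) F a b =
             \sum_(a : 'I_n) \sum_(b : 'I_n) ((a < b)%N && F a b)
           + \sum_(a : 'I_n) \sum_(b : 'I_n) ((b < a)%N && F a b))%N.
  rewrite -big_split; apply: eq_bigr => a _; rewrite -big_split; apply: eq_bigr => b _.
  by case: (ltngtP a b) => [|| /val_inj ->] //=; rewrite ?Fdiag ?addn0.
rewrite -addnn; congr (_ + _)%N; rewrite exchange_big /=.
by apply: eq_bigr => a _; apply: eq_bigr => b _; rewrite FC.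
Qed.

Lemma ninv_reindex u v :
  (\sum_(a : 'I_n) \sum_(b : 'I_n) ((a < b)%N && swapped v (u a) (u b)) = ninv v)%N.
Proof.
rewrite -[LHS]doubleK -[RHS]doubleK; congr (_./2).
rewrite /ninv !sum_pairs_sym => [|a b|a|a b|a]; rewrite ?swapped_diag 1?[LHS]swappedC //.
rewrite [RHS](reindex_inj (@perm_inj _ u)) /=; apply: eq_bigr => a _.
by rewrite [RHS](reindex_inj (@perm_inj _ u)).
Qed.

Lemma odd_ninvM u v : odd (ninv (u * v)%g) = odd (ninv u) (+) odd (ninv v).
Proof.
have swappedM a b : swapped (u * v)%g a b = swapped u a b (+) swapped v (u a) (u b).
  rewrite /swapped !permM.
  by case: (a < b)%N; case: (u a < u b)%N; case: (v (u a) < v (u b))%N.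
rewrite -(ninv_reindex u v) !odd_ninvE odd_sum -big_split /=; apply: eq_bigr => a _.
rewrite odd_sum -big_split /=; apply: eq_bigr => b _.
by rewrite swappedM andb_addr oddb.
Qed.

Lemma ninv1 : ninv 1 = 0%N.
Proof.
rewrite /ninv big1 // => a _; rewrite big1 // => b _.
by rewrite /swapped !perm1 addbb andbF.
Qed.

Lemma odd_ninvJ u v : odd (ninv (u ^ v)%g) = odd (ninv u).
Proof.
have := odd_ninvM v v^-1; rewrite mulgV ninv1 conjgE !odd_ninvM /=.
by case: (odd (ninv v)); case: (odd (ninv v^-1)); case: (odd (ninv u)).
Qed.

Lemma odd_ninv_tperm_adj a b : val b = (val a).+1 -> odd (ninv (tperm a b)).
Proof.
move=> Sa; have swapped_tperm (c d : 'I_n) :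
    ((c < d)%N && swapped (tperm a b) c d) = (c == a) && (d == b).
  rewrite /swapped.
  case: tpermP => [->|->|ca cb]; case: tpermP => [->|->|da db];
    repeat match goal with H : _ <> _ |- _ => move/eqP: H end; move: Sa;
    rewrite -?val_eqE;
    repeat match goal with o : 'I_n |- _ => case: o => [? ?] end; simpl; lia.
rewrite odd_ninvE.
under eq_bigr => c _ do under eq_bigr => d _ do rewrite swapped_tperm.
rewrite (bigD1 a) //= [X in _ (+) X]big1 => [|c /negbTE ->]; last by rewrite big1.
rewrite addbF eqxx /= (bigD1 b) // big1 => [|d /andP [_ /negbTE ->]] //.
by rewrite eqxx.
Qed.

Lemma odd_ninv_tperm a b : odd (ninv (tperm a b)) = (a != b).
Proof.
have [->|ab] := eqVneq a b; first by rewrite tperm1 ninv1.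
wlog lt_ab : a b ab / (a < b)%N.
  move=> IH; case: (ltngtP a b) => [|ba|/val_inj eq_ab]; first exact: IH.
    by rewrite tpermC IH // eq_sym.
  by rewrite eq_ab eqxx in ab.
have lt_Sa : (a.+1 < n)%N by apply: leq_ltn_trans (ltn_ord b).
pose a' := Ordinal lt_Sa.
have [<-|a'b] := eqVneq a' b; first exact: odd_ninv_tperm_adj.
have a'a : a' != a by rewrite -val_eqE /= neq_ltn ltnSn orbT.
rewrite tpermC -(tpermJ_tperm a'a) ?(eq_sym b a) // odd_ninvJ tpermC.
exact: odd_ninv_tperm_adj.
Qed.

Lemma odd_ninv u : odd (ninv u) = odd_perm u.
Proof.
case: (prod_tpermP u) => ts -> {u}; elim: ts => [|t ts IH].
  by rewrite big_nil ninv1 odd_perm1.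
rewrite [all _ _]/= => /andP [_ /IH {}IH].
by rewrite big_cons odd_ninvM IH odd_ninv_tperm odd_mul_tperm.
Qed.

Lemma odd_clsignT C :
  odd (clsign C setT) =
    xorsum (fun a : 'I_n => (a \in C) && ~~ xorsum (fun b : 'I_n => (b < a)%N)).
Proof.
rewrite /clsign (eq_bigl predT) => [|b]; last by rewrite inE.
rewrite odd_sum.
under eq_bigr => b _ do rewrite oddD /card_gt card_set_sum odd_sum oddb.
rewrite big_split /= exchange_big /= -big_split /=; apply: eq_bigr => a _.
rewrite -addbT andb_addr andbT; congr (_ (+) _).
by case: (a \in C) => /=; [apply: eq_bigr => b _; rewrite oddb | rewrite big1].
Qed.

Lemma odd_clsign_symd A D :
  odd (clsign (symd A D) setT) = odd (clsign A setT) (+) odd (clsign D setT).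
Proof.
rewrite !odd_clsignT -big_split /=; apply: eq_bigr => a _.
by rewrite -andb_addl !inE; case: (a \in A); case: (a \in D).
Qed.

Lemma odd_inv_inE w S : odd (inv_in w S) =
  xorsum (fun a : 'I_n =>
    xorsum (fun b : 'I_n => [&& a \in S, b \in S, (a < b)%N & swapped w a b])).
Proof.
rewrite /inv_in big_mkcond odd_sum; apply: eq_bigr => a _.
case: (a \in S); last by rewrite big1.
rewrite big_mkcond odd_sum; apply: eq_bigr => b _.
case: (b \in S) => //=; rewrite oddb /swapped; case: ltngtP => //= ab.
by rewrite ltn_perm_swap // neq_ltn ab.
Qed.

Lemma xorsum_pairs (F : 'I_n -> 'I_n -> bool) :
  xorsum (fun a : 'I_n => xorsum (fun b : 'I_n => F a b)) =
  xorsum (fun a : 'I_n => xorsum (fun b : 'I_n => (a < b)%N && (F a b (+) F b a)))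
    (+) xorsum (fun a : 'I_n => F a a).
Proof.
have -> : xorsum (fun a : 'I_n => xorsum (fun b : 'I_n => F a b)) =
   xorsum (fun a : 'I_n => xorsum (fun b : 'I_n => (a < b)%N && F a b))
   (+) xorsum (fun a : 'I_n => xorsum (fun b : 'I_n => (b < a)%N && F a b))
   (+) xorsum (fun a : 'I_n => xorsum (fun b : 'I_n => (a == b) && F a b)).
  rewrite -!big_split /=; apply: eq_bigr => a _; rewrite -!big_split /=.
  apply: eq_bigr => b _; case: (ltngtP a b) => [ab|ab|/val_inj ->]; rewrite ?eqxx //=;
  (have /negbTE -> : a != b by rewrite neq_ltn ab ?orbT); by rewrite ?addbF.
rewrite [X in _ (+) X](_ : _ = xorsum (fun a : 'I_n => F a a)); last first.
  apply: eq_bigr => a _; rewrite (bigD1 a) //= eqxx big1 ?addbF // => b ba.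
  by rewrite eq_sym (negbTE ba).
congr (_ (+) _); rewrite [X in _ (+) X]exchange_big /= -big_split /=.
by apply: eq_bigr => a _; rewrite -big_split /=; apply: eq_bigr => b _; rewrite andb_addr.
Qed.

(* The pairs (a, b) swapped by w split into those inside B, inside ~: B, and
   those straddling B; the last are counted, mod 2, by the reordering signs
   of c_B c_(~: B) and c_(w B) c_(~: w B) inside c_T. *)
Lemma odd_ninv_split w B : odd (ninv w) =
  odd (inv_in w B) (+) odd (inv_in w (~: B))
    (+) odd (clsign B setT) (+) odd (clsign (w @: B) setT).
Proof.
have clsign_imset : odd (clsign (w @: B) setT) =
    xorsum (fun a : 'I_n => (a \in B) && ~~ xorsum (fun b : 'I_n => (w b < w a)%N)).
  rewrite odd_clsignT (reindex_inj (@perm_inj _ w)) /=; apply: eq_bigr => a _.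
  by rewrite mem_imset_perm permK (reindex_inj (@perm_inj _ w)).
have straddle : odd (clsign B setT) (+) odd (clsign (w @: B) setT) =
    xorsum (fun a : 'I_n => xorsum (fun b : 'I_n => (b \in B) && swapped w a b)).
  rewrite odd_clsignT clsign_imset -big_split /= exchange_big /=.
  apply: eq_bigr => a _; rewrite -andb_addr; case: (a \in B) => /=; last by rewrite big1.
  by rewrite addbN addNb negbK -big_split.
rewrite -addbA straddle xorsum_pairs [X in _ (+) (_ (+) X)]big1; last first.
  by move=> a _; rewrite swapped_diag andbF.
rewrite addbF odd_ninvE !odd_inv_inE -!big_split /=; apply: eq_bigr => a _.
rewrite -!big_split /=; apply: eq_bigr => b _.
rewrite (swappedC w b a) !inE.
by case: (a \in B); case: (b \in B); case: (a < b)%N; case: (swapped w a b).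
Qed.

End SignCombinatorics.

Section Sergeev.
Variables (k : fieldType) (n : nat).
Local Notation sgn e := ((-1 : k) ^+ e).
Local Notation idx := ({set 'I_n} * 'S_n)%type.
Implicit Types (x y z : Se k n) (p q r : idx) (c : k) (A B C D : {set 'I_n}).

Lemma sgn_odd a b : odd a = odd b -> sgn a = sgn b.
Proof. by move=> odd_ab; rewrite -signr_odd odd_ab signr_odd. Qed.

Lemma clmono_coef C A : (clmono k C : Cl k n) A = (A == C)%:R.
Proof. by rewrite ffunE. Qed.

Lemma clmulgen_mono e C j :
  clmulgen (sgn e *: clmono k C) j =
    sgn (clmul_step (e, C) j).1 *: clmono k (clmul_step (e, C) j).2.
Proof.
rewrite /clmulgen (bigD1 C) //= big1 => [|A /negbTE AC]; last first.
  by rewrite ffunE clmono_coef AC scaler0 scale0r.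
rewrite ffunE clmono_coef eqxx /clmono_gen /toggle /card_gt addr0.
have -> : (sgn e *: true%:R : k^o) = sgn e by rewrite [LHS]mulr1.
by case: (j \in C); rewrite !exprD scalerA ?expr1 ?mulrN1 ?scalerN ?scaleNr ?expr0 ?mulr1.
Qed.

Lemma clword_mono e C s :
  clword (sgn e *: clmono k C) s =
    sgn (foldl (@clmul_step n) (e, C) s).1
      *: clmono k (foldl (@clmul_step n) (e, C) s).2.
Proof.
elim: s e C => [|j s IH] e C //=.
by rewrite /clword /= clmulgen_mono -IH.
Qed.

Lemma clmono_sgn0 D : clmono k D = sgn 0 *: clmono k D.
Proof. by rewrite expr0 scale1r. Qed.

Lemma clconj_mono (w : 'S_n) B :
  clconj w (clmono k B) = sgn (inv_in w B) *: clmono k (w @: B).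
Proof.
rewrite /clconj (bigD1 B) //= big1 => [|B' /negbTE BB]; last first.
  by rewrite clmono_coef BB scale0r.
rewrite clmono_coef eqxx scale1r addr0 clmono_sgn0 clword_mono.
by rewrite foldl_clmul_step_perm ?sorted_enum_set //= set_enum.
Qed.

Lemma clmul_mono A c B :
  clmul (clmono k A) (c *: clmono k B) = (c * sgn (clsign A B)) *: clmono k (symd A B).
Proof.
rewrite /clmul (bigD1 B) //= big1 => [|B' /negbTE BB]; last first.
  by rewrite ffunE clmono_coef BB scaler0 scale0r.
rewrite ffunE clmono_coef eqxx addr0 clmono_sgn0 clword_mono.
rewrite foldl_clmul_step ?sorted_enum_set //= set_enum scalerA add0n.
by congr (_ *: _); rewrite [X in X * _]mulr1.
Qed.

Definition sebase r : Se k n := [ffun r' => (r' == r)%:R].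

Definition sebase_mul p q : Se k n :=
  sebasis (clmul (clmono k p.1) (clconj p.2 (clmono k q.1))) (scomp p.2 q.2).

Lemma sebasis_mono c D u : sebasis (c *: clmono k D) u = c *: sebase (D, u).
Proof.
apply/ffunP => -[D' u']; rewrite !ffunE /= xpair_eqE.
by case: (u' == u); rewrite ?andbT ?andbF ?scaler0.
Qed.

Lemma sebase_mulE A w B v :
  sebase_mul (A, w) (B, v) =
    sgn (inv_in w B + clsign A (w @: B)) *: sebase (symd A (w @: B), scomp w v).
Proof. by rewrite /sebase_mul /= clconj_mono clmul_mono sebasis_mono exprD. Qed.

Lemma sebase_mul0r p u : sebase_mul p (set0, u) = sebase (p.1, scomp p.2 u).
Proof.
by case: p => A w; rewrite sebase_mulE imset0 inv_in0 clsign0r symd0 expr0 scale1r.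
Qed.

Lemma sebase_decomp x : x = \sum_r x r *: sebase r.
Proof.
apply/ffunP => r; rewrite sum_ffunE (bigD1 r) //= big1 => [|r' r'r]; last first.
  by rewrite !ffunE eq_sym (negbTE r'r) scaler0.
by rewrite !ffunE eqxx addr0; apply/esym/mulr1.
Qed.

Lemma sum_sebase_coef (F : idx -> Se k n) r0 :
  \sum_r ((r == r0)%:R : k) *: F r = F r0.
Proof.
rewrite (bigD1 r0) //= big1 => [|r /negbTE ->]; last by rewrite scale0r.
by rewrite eqxx scale1r addr0.
Qed.

Lemma semulE x y : semul x y = \sum_p \sum_q (x p * y q) *: sebase_mul p q.
Proof. by []. Qed.

Lemma semulDl x1 x2 y : semul (x1 + x2) y = semul x1 y + semul x2 y.
Proof.
rewrite !semulE -big_split /=; apply: eq_bigr => p _.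
by rewrite -big_split /=; apply: eq_bigr => q _; rewrite ffunE mulrDl scalerDl.
Qed.

Lemma semulDr x y1 y2 : semul x (y1 + y2) = semul x y1 + semul x y2.
Proof.
rewrite !semulE -big_split /=; apply: eq_bigr => p _.
by rewrite -big_split /=; apply: eq_bigr => q _; rewrite ffunE mulrDr scalerDl.
Qed.

Lemma semulZl c x y : semul (c *: x) y = c *: semul x y.
Proof.
rewrite !semulE scaler_sumr; apply: eq_bigr => p _.
by rewrite scaler_sumr; apply: eq_bigr => q _; rewrite ffunE scalerA mulrA.
Qed.

Lemma semulZr c x y : semul x (c *: y) = c *: semul x y.
Proof.
rewrite !semulE scaler_sumr; apply: eq_bigr => p _.
by rewrite scaler_sumr; apply: eq_bigr => q _; rewrite ffunE scalerA mulrCA.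
Qed.

Lemma semul0l y : semul 0 y = 0.
Proof.
rewrite semulE big1 // => p _; rewrite big1 // => q _.
by rewrite ffunE mul0r scale0r.
Qed.

Lemma semul0r x : semul x 0 = 0.
Proof.
rewrite semulE big1 // => p _; rewrite big1 // => q _.
by rewrite ffunE mulr0 scale0r.
Qed.

Lemma semul_suml (J : finType) (F : J -> Se k n) y :
  semul (\sum_j F j) y = \sum_j semul (F j) y.
Proof.
elim/big_rec2: _ => [|j y1 y2 _ <-]; first by rewrite semul0l.
by rewrite semulDl.
Qed.

Lemma semul_sumr (J : finType) x (F : J -> Se k n) :
  semul x (\sum_j F j) = \sum_j semul x (F j).
Proof.
elim/big_rec2: _ => [|j y1 y2 _ <-]; first by rewrite semul0r.
by rewrite semulDr.
Qed.

Lemma semul_sebaser x q : semul x (sebase q) = \sum_p x p *: sebase_mul p q.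
Proof.
rewrite semulE; apply: eq_bigr => p _.
under eq_bigr => q' _ do rewrite ffunE -scalerA.
by rewrite -scaler_sumr sum_sebase_coef.
Qed.

Lemma semul_sebase p q : semul (sebase p) (sebase q) = sebase_mul p q.
Proof.
rewrite semul_sebaser (bigD1 p) //= big1 => [|p' /negbTE p'p]; last first.
  by rewrite ffunE p'p scale0r.
by rewrite ffunE eqxx scale1r addr0.
Qed.

Definition assoc_at r :=
  forall p q, semul (sebase_mul p q) (sebase r) = semul (sebase p) (sebase_mul q r).

Lemma semul_assoc_sebase r : assoc_at r ->
  forall x y, semul (semul x y) (sebase r) = semul x (semul y (sebase r)).
Proof.
move=> assoc_r x y.
rewrite [semul y _]semul_sebaser semul_sumr [semul x y]semulE semul_suml.
under eq_bigr => p _ do rewrite semul_suml.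
under [in RHS]eq_bigr => q _ do rewrite semulZr {1}(sebase_decomp x) semul_suml.
under [in RHS]eq_bigr => q _ do rewrite scaler_sumr.
rewrite [in RHS]exchange_big /=; apply: eq_bigr => p _; apply: eq_bigr => q _.
by rewrite semulZl assoc_r semulZl scalerA mulrC.
Qed.

Lemma semul_assoc z : (forall r, z r != 0 -> assoc_at r) ->
  forall x y, semul (semul x y) z = semul x (semul y z).
Proof.
move=> assoc_z x y.
rewrite (sebase_decomp z) [LHS]semul_sumr [semul y _]semul_sumr [RHS]semul_sumr.
apply: eq_bigr => r _; have [->|zr] := eqVneq (z r) 0.
  by rewrite !scale0r !semul0r.
by rewrite !semulZr semul_assoc_sebase //; apply: assoc_z.
Qed.

Lemma assoc_at_perm u : assoc_at (set0, u).
Proof.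
move=> [A w] [B v]; rewrite sebase_mul0r sebase_mulE semulZl !semul_sebase.
by rewrite sebase_mul0r sebase_mulE /= /scomp mulgA.
Qed.

Definition cT : Se k n := sebase (setT, 1%g).

Lemma assoc_at_cT : assoc_at (setT, 1%g).
Proof.
move=> [A w] [B v].
rewrite sebase_mulE semulZl semul_sebase sebase_mulE sebase_mulE semulZr.
rewrite semul_sebase sebase_mulE !scalerA !imsetT_perm !symdT /scomp !mul1g.
rewrite imsetC_perm symdC -!exprD; congr (_ *: _); apply: sgn_odd.
rewrite !oddD !inv_inT !odd_ninvM odd_clsign_symd (odd_ninv_split w B).
rewrite -(clsign_setC A (w @: B)) oddD.
case: (odd (inv_in w B)); case: (odd (clsign A (w @: B))); case: (odd (ninv v));
  case: (odd (clsign (w @: B) setT)); case: (odd (clsign B setT));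
  case: (odd (inv_in w (~: B))); by case: (odd (clsign A (~: (w @: B)))).
Qed.

Lemma semul_assoc_cT x y : semul (semul x y) cT = semul x (semul y cT).
Proof.
apply: semul_assoc => r; rewrite ffunE.
by have [-> _|] := eqVneq r (setT, 1%g); [exact: assoc_at_cT | rewrite eqxx].
Qed.

Lemma semul_assoc_group z : (forall r, z r != 0 -> r.1 = set0) ->
  forall x y, semul (semul x y) z = semul x (semul y z).
Proof.
by move=> supp_z; apply: semul_assoc => -[D u] /supp_z /= ->; apply: assoc_at_perm.
Qed.

Lemma group_supp c (F : 'S_n -> k) r :
  (c *: \sum_u F u *: sebase (set0, u)) r != 0 -> r.1 = set0.
Proof.
case: r => D u0 /=; apply: contraNeq => D0.
rewrite !ffunE sum_ffunE big1 ?scaler0 // => u _.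
by rewrite !ffunE xpair_eqE (negbTE D0) scaler0.
Qed.

Lemma e_trivE : e_triv k n = (n`!%:R)^-1 *: \sum_u 1 *: sebase (set0, u).
Proof.
congr (_ *: _); apply: eq_bigr => u _.
by rewrite -[clmono k set0]scale1r sebasis_mono.
Qed.

Lemma e_sgnE :
  e_sgn k n = (n`!%:R)^-1 *: \sum_u sgn (odd_perm u) *: sebase (set0, u).
Proof.
congr (_ *: _); apply: eq_bigr => u _.
by rewrite -[clmono k set0]scale1r sebasis_mono scale1r.
Qed.

Lemma semul_assoc_e_triv x y :
  semul (semul x y) (e_triv k n) = semul x (semul y (e_triv k n)).
Proof. by apply: semul_assoc_group => r; rewrite e_trivE => /group_supp. Qed.

Lemma semul_assoc_e_sgn x y :
  semul (semul x y) (e_sgn k n) = semul x (semul y (e_sgn k n)).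
Proof. by apply: semul_assoc_group => r; rewrite e_sgnE => /group_supp. Qed.

Lemma semul_perm_cT u :
  semul (sebase (set0, u)) cT = sgn (odd_perm u) *: sebase (setT, u).
Proof.
rewrite semul_sebase sebase_mulE imsetT_perm clsign0l addn0 inv_inT.
by rewrite symdT setC0 /scomp mul1g -signr_odd odd_ninv.
Qed.

Lemma semul_cT_perm u : semul cT (sebase (set0, u)) = sebase (setT, u).
Proof. by rewrite semul_sebase sebase_mul0r /scomp mulg1. Qed.

Lemma e_triv_cT : semul (e_triv k n) cT = semul cT (e_sgn k n).
Proof.
rewrite e_trivE e_sgnE semulZl semulZr semul_suml semul_sumr; congr (_ *: _).
by apply: eq_bigr => u _; rewrite semulZl semul_perm_cT scale1r semulZr semul_cT_perm.
Qed.

Lemma e_sgn_cT : semul (e_sgn k n) cT = semul cT (e_triv k n).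
Proof.
rewrite e_trivE e_sgnE semulZl semulZr semul_suml semul_sumr; congr (_ *: _).
apply: eq_bigr => u _.
by rewrite semulZl semul_perm_cT signrZK semulZr semul_cT_perm scale1r.
Qed.

Lemma semul_cTK x : semul (semul x cT) cT = sgn (clsign [set: 'I_n] [set: 'I_n]) *: x.
Proof.
rewrite semul_assoc_cT semul_sebase sebase_mulE imsetT_perm inv_inT ninv1.
rewrite symdT setCT semulZr semul_sebaser [in RHS](sebase_decomp x) !scaler_sumr.
by apply: eq_bigr => -[A w] _; rewrite sebase_mul0r /scomp !mulg1 mul1g.
Qed.

Lemma semul_cT_coef x r : semul x cT r != 0 -> x (~: r.1, r.2) != 0.
Proof.
apply: contraNneq => x0; rewrite semul_sebaser sum_ffunE big1 // => -[B v] _.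
rewrite sebase_mulE imsetT_perm symdT /scomp mul1g !ffunE.
case: eqP => [r_eq|]; last by rewrite !scaler0.
by move: x0; rewrite r_eq /= setCK => ->; rewrite scale0r.
Qed.

Lemma homog_semul_cT (d : bool) x : homog d x -> homog (d (+) odd n) (semul x cT).
Proof.
move=> homog_x r /semul_cT_coef /homog_x /= odd_compl.
have := cardsC r.1; rewrite card_ord => /(congr1 odd); rewrite oddD odd_compl => <-.
by rewrite addbC -addbA addbb addbF.
Qed.

End Sergeev.

Unset Implicit Arguments.
Set Strict Implicit.
Set Printing Implicit Defensive.

Theorem lemma2 (k : fieldType) (n : nat) :
  [pchar k] =i pred0 -> (0 < n)%N ->
  exists f : Se k n -> Se k n,
    (forall x, left_ideal (e_triv k n) x -> left_ideal (e_sgn k n) (f x)) /\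
    (forall x y, left_ideal (e_triv k n) x -> left_ideal (e_triv k n) y ->
       f (x + y) = f x + f y) /\
    (forall (c : k) x, left_ideal (e_triv k n) x -> f (c *: x) = c *: f x) /\
    (forall a x, left_ideal (e_triv k n) x -> f (semul a x) = semul a (f x)) /\
    (forall x y, left_ideal (e_triv k n) x -> left_ideal (e_triv k n) y ->
       f x = f y -> x = y) /\
    (forall z, left_ideal (e_sgn k n) z ->
       exists x, left_ideal (e_triv k n) x /\ f x = z) /\
    (forall (p : bool) x, left_ideal (e_triv k n) x -> homog p x ->
       homog (p (+) odd n) (f x)).
Proof.
move=> _ _; pose s : k := (-1) ^+ clsign [set: 'I_n] [set: 'I_n].
exists (fun x => semul x (cT k n)).
split.
  move=> _ [y ->]; exists (semul y (cT k n)).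
  by rewrite semul_assoc_cT e_triv_cT semul_assoc_e_sgn.
split; first by move=> x y _ _; rewrite semulDl.
split; first by move=> c x _; rewrite semulZl.
split; first by move=> a x _; rewrite semul_assoc_cT.
split.
  move=> x y _ _ /(congr1 (fun z => s *: semul z (cT k n))).
  by rewrite !semul_cTK !signrZK.
split.
  move=> _ [y ->]; exists (s *: semul (semul y (cT k n)) (e_triv k n)); split.
    by exists (s *: semul y (cT k n)); rewrite semulZl.
  rewrite semulZl semul_assoc_e_triv -e_sgn_cT -semul_assoc_cT semul_cTK.
  exact: signrZK.
by move=> p x _; apply: homog_semul_cT.
Qed.
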